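(* Fix $\chi \in C_c^\infty((0,1))$. There is a function $g_\chi:(0,\infty) \to [0,\infty)$ depending only on $\chi$ such that: for every $N \in \mathbb N$, every $a \in \mathbb Z_N \simeq \{0,\dots,N-1\}$ and every $r \in (0,1/2)$ with $d(a/N, 0) \ge r$, $$\Big| \sum_{m=0}^{N-1} \exp\Big(\frac{2\pi i a m}{N}\Big) \chi\Big(\frac mN\Big)\Big| \le N \cdot g_\chi(Nr);$$ moreover, for every $n \ge 0$ there is $C_n>0$ (depending only on $\chi$) with $g_\chi(x) \le C_n x^{-n}$ for all $x>0$, and if $\chi \in \mathcal G^s_c((0,1))$ for some $s>1$ then there are $C, c > 0$ (depending only on $\chi$) with $g_\chi(x) \le C e^{-c x^{1/s}}$ for all $x > 0$.
   Context: On $[0,1]$ with $0$ and $1$ identified, $d(x,y) = \min\{|x-y|, 1 - |x-y|\}$. For $s>1$, $\mathcal G^s_c((0,1))$ is the set of $f \in C_c^\infty(\mathbb R)$ with $\operatorname{supp} f \subset (0,1)$ such that for every compact $K' \subset \mathbb R$ there is $C_{K',f}$ with $\sup_{x \in K'}|\partial^\alpha f(x)| \le C_{K',f}^{\alpha+1}(\alpha!)^s$ for all integers $\alpha \ge 0$. *)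

From Stdlib Require Import Reals Factorial.
From Coquelicot Require Import Coquelicot.
Open Scope R_scope.

Definition smooth (f : R -> R) : Prop :=
  forall (k : nat) (x : R), ex_derive_n f k x.

Definition compact_support_in_01 (f : R -> R) : Prop :=
  exists eps : R, 0 < eps /\ forall x : R, (x <= eps \/ 1 - eps <= x) -> f x = 0.

Definition Cc_inf_01 (f : R -> R) : Prop := smooth f /\ compact_support_in_01 f.

(* Gevrey class G^s_c((0,1)): compact subsets K' of R are handled through
   the closed bounded intervals [lo, hi] (every compact set lies in one). *)
Definition gevrey_c_01 (s : R) (f : R -> R) : Prop :=
  Cc_inf_01 f /\
  forall lo hi : R, exists C : R, 0 < C /\
    forall (alpha : nat) (x : R), lo <= x <= hi ->
      Rabs (Derive_n f alpha x) <= C ^ (alpha + 1) * Rpower (INR (Factorial.fact alpha)) s.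

(* Distance on the circle R/Z (for x in [0,1]) *)
Definition dist_circ (x y : R) : R := Rmin (Rabs (x - y)) (1 - Rabs (x - y)).

Definition expi (t : R) : C := (cos t, sin t).

Definition exp_sum (chi : R -> R) (N a : nat) : C :=
  sum_n (fun m : nat =>
     Cmult (expi (2 * PI * INR a * INR m / INR N)) (RtoC (chi (INR m / INR N))))
    (N - 1)%nat.

(* Summing by parts k times, (1 - e^{iθ})^k times the sum Σ_m e^{iθm} χ(m/N) becomes the
   same twisted sum of the k-th backward differences of χ with step 1/N; by the mean value
   theorem each of these is at most N^{-k} sup|χ^(k)|, and at most N(k+1) of them are nonzero.
   As |1 - e^{2πia/N}| >= d(a/N, 0) >= r, the sum is at most N (k+1) sup|χ^(k)| / (Nr)^k for
   every k, so g_χ(x) = inf_k (k+1) sup|χ^(k)| / x^k works. A fixed k >= n gives the decay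
   x^{-n}; for χ of Gevrey class s, sup|χ^(k)| <= C^{k+1} (k!)^s and the choice
   k = ⌊(x/4C)^{1/s}⌋ gives the decay exp(-c x^{1/s}). *)

From Stdlib Require Import Reals Factorial Lra Lia.
From Coquelicot Require Import Coquelicot.
Open Scope R_scope.

Fixpoint backdiff (f : R -> R) (d : R) (k : nat) : R -> R :=
  match k with
  | O => f
  | S k => fun y => backdiff f d k y - backdiff f d k (y - d)
  end.

Section BackwardDifferences.

Variables (f : R -> R) (d : R).
Hypothesis d_pos : 0 < d.
Hypothesis f_smooth : smooth f.

Lemma smooth_backdiff k : smooth (backdiff f d k).
Proof.
  induction k as [|k IH]; [exact f_smooth|].
  intros n x; apply ex_derive_n_minus; apply filter_forall; intros y j _.
  - exact (IH j y).
  - exact (ex_derive_n_comp_trans _ _ _ _ (IH j _)).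
Qed.

Lemma Derive_n_backdiff_S k j y :
  Derive_n (backdiff f d (S k)) j y =
  Derive_n (backdiff f d k) j y - Derive_n (backdiff f d k) j (y - d).
Proof.
  simpl; rewrite Derive_n_minus; [rewrite (Derive_n_comp_trans _ j y (- d)); reflexivity | |];
    apply filter_forall; intros z i _.
  - apply smooth_backdiff.
  - apply ex_derive_n_comp_trans, smooth_backdiff.
Qed.

Lemma Derive_n_backdiff_bound k j U :
  (forall z, Rabs (Derive_n f (j + k) z) <= U) ->
  forall y, Rabs (Derive_n (backdiff f d k) j y) <= d ^ k * U.
Proof.
  revert j; induction k as [|k IH]; intros j HU y.
  - rewrite Nat.add_0_r in HU; rewrite Rmult_1_l; apply HU.
  - rewrite Derive_n_backdiff_S.
    destruct (MVT_gen (Derive_n (backdiff f d k) j) (y - d) y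
                (Derive_n (backdiff f d k) (S j))) as [c [_ ->]].
    + intros x _; apply Derive_correct, (smooth_backdiff k (S j) x).
    + intros x _; apply continuity_pt_filterlim, (ex_derive_continuous (V := R_NormedModule)).
      apply (smooth_backdiff k (S j) x).
    + rewrite Nat.add_succ_r, <- Nat.add_succ_l in HU.
      replace (y - (y - d)) with d by ring.
      rewrite Rabs_mult, (Rabs_pos_eq d) by lra; simpl.
      rewrite Rmult_comm, Rmult_assoc.
      apply Rmult_le_compat_l; [lra | exact (IH (S j) HU c)].
Qed.

Hypothesis f_vanishes : forall y, y <= 0 \/ 1 <= y -> f y = 0.

Lemma backdiff_vanishes k y :
  y <= 0 \/ 1 + INR k * d <= y -> backdiff f d k y = 0.
Proof.
  revert y; induction k as [|k IH]; intros y Hy; simpl.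
  - apply f_vanishes; simpl in Hy; lra.
  - rewrite S_INR in Hy; rewrite !IH; [ring | |]; lra.
Qed.

End BackwardDifferences.

Lemma expi_add s t : expi (s + t) = (expi s * expi t)%C.
Proof.
  unfold expi, Cmult; simpl; rewrite cos_plus, sin_plus; f_equal; ring.
Qed.

Lemma Cmod_expi t : Cmod (expi t) = 1.
Proof.
  unfold expi, Cmod; simpl.
  replace (cos t * (cos t * 1) + sin t * (sin t * 1)) with (Rsqr (sin t) + Rsqr (cos t))
    by (unfold Rsqr; ring).
  rewrite sin2_cos2; apply sqrt_1.
Qed.

Lemma expi_0 : expi 0 = 1.
Proof. unfold expi; rewrite cos_0, sin_0; reflexivity. Qed.

Definition twisted_sum (th d : R) (G : R -> R) (L : nat) : C :=
  sum_n (fun m => (expi (th * INR m) * G (INR m * d)%R)%C) L.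

Lemma twisted_sum_backdiff th d G L : G (- d) = 0 ->
  twisted_sum th d (fun y => G y - G (y - d)) L =
  ((1 - expi th) * twisted_sum th d G L + expi (th * INR (S L)) * G (INR L * d)%R)%C.
Proof.
  intros G0; unfold twisted_sum; induction L as [|L IH].
  - rewrite !sum_O; simpl INR.
    replace (0 * d - d) with (- d) by ring; rewrite G0, Rmult_1_r, Rmult_0_r, Rmult_0_l.
    rewrite RtoC_minus, expi_0; ring.
  - rewrite !sum_Sn; change plus with Cplus; rewrite IH.
    replace (INR (S L) * d - d) with (INR L * d) by (rewrite S_INR; ring).
    rewrite RtoC_minus, (S_INR (S L)), Rmult_plus_distr_l, Rmult_1_r, expi_add; ring.
Qed.

Lemma Cmod_twisted_sum_backdiff f th d L k : 0 < d ->
  (forall y, y <= 0 \/ 1 <= y -> f y = 0) -> 1 + INR k * d <= INR (S L) * d ->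
  Cmod (twisted_sum th d (backdiff f d k) L) =
  Cmod (1 - expi th) ^ k * Cmod (twisted_sum th d f L).
Proof.
  intros d_pos f_vanishes; induction k as [|k IH]; intros Hk; [simpl; ring|].
  rewrite S_INR, (S_INR L) in Hk.
  change (backdiff f d (S k)) with (fun y => backdiff f d k y - backdiff f d k (y - d)).
  rewrite twisted_sum_backdiff by (apply backdiff_vanishes; auto; lra).
  rewrite (backdiff_vanishes f d d_pos f_vanishes k (INR L * d)) by (right; lra).
  rewrite Cmult_0_r, Cplus_0_r, Cmod_mult, IH by (rewrite S_INR; lra); simpl; ring.
Qed.

Lemma Cmod_twisted_sum_le th d G L B : (forall m, Rabs (G (INR m * d)) <= B) ->
  Cmod (twisted_sum th d G L) <= INR (S L) * B.
Proof.
  intros HB; unfold twisted_sum; induction L as [|L IH].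
  - rewrite sum_O, Cmod_mult, Cmod_expi, Cmod_R; specialize (HB 0%nat); simpl in *; lra.
  - rewrite sum_Sn; eapply Rle_trans; [apply Cmod_triangle|].
    rewrite Cmod_mult, Cmod_expi, Cmod_R, (S_INR (S L)); specialize (HB (S L)); lra.
Qed.

Lemma le_sin_PI_mul t : 0 <= t <= 1 / 2 -> t <= sin (PI * t).
Proof.
  intros Ht; assert (PI_le_4 := PI_4); assert (PI_gt_3 := PI2_3_2).
  assert (Hv : 0 <= PI * t <= 2) by nra.
  destruct (sin_bound (PI * t) 0) as [Hsin _]; [lra | nra |].
  replace (sin_approx (PI * t) (2 * 0 + 1)) with (PI * t - (PI * t) ^ 3 / 6) in Hsin
    by (unfold sin_approx, sin_term; simpl; field).
  assert (Hsq : (PI * t) * (PI * t) <= 4) by nra.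
  assert ((PI * t) ^ 3 <= 4 * (PI * t)) by (simpl; nra).
  nra.
Qed.

Lemma Cmod_1_minus_expi_double th : Cmod (1 - expi (2 * th)) = 2 * Rabs (sin th).
Proof.
  unfold Cmod, expi, Cminus, Cplus, Copp; simpl.
  rewrite cos_2a_sin, sin_2a.
  replace ((1 + - (1 - 2 * sin th * sin th)) * ((1 + - (1 - 2 * sin th * sin th)) * 1) +
           (0 + - (2 * sin th * cos th)) * ((0 + - (2 * sin th * cos th)) * 1))
    with (Rsqr (2 * sin th) * (Rsqr (sin th) + Rsqr (cos th))) by (unfold Rsqr; ring).
  rewrite sin2_cos2, Rmult_1_r, sqrt_Rsqr_abs, Rabs_mult, (Rabs_pos_eq 2); lra.
Qed.

Lemma dist_circ_le_Cmod_1_minus_expi t : 0 <= t < 1 ->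
  dist_circ t 0 <= Cmod (1 - expi (2 * PI * t)).
Proof.
  intros Ht; assert (PI_gt_3 := PI2_3_2).
  rewrite Rmult_assoc, Cmod_1_minus_expi_double, Rabs_pos_eq by (apply sin_ge_0; nra).
  unfold dist_circ; rewrite Rminus_0_r, Rabs_pos_eq by lra.
  destruct (Rle_lt_dec t (1 / 2)).
  - assert (Rmin t (1 - t) <= t) by apply Rmin_l.
    assert (t <= sin (PI * t)) by (apply le_sin_PI_mul; lra); lra.
  - assert (Rmin t (1 - t) <= 1 - t) by apply Rmin_r.
    assert (1 - t <= sin (PI * (1 - t))) by (apply le_sin_PI_mul; lra).
    rewrite Rmult_minus_distr_l, Rmult_1_r, sin_PI_x in *; lra.
Qed.

Lemma Derive_n_vanishes_outside f (f_vanishes : forall y, y <= 0 \/ 1 <= y -> f y = 0) k y :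
  y < 0 \/ 1 < y -> Derive_n f k y = 0.
Proof.
  intros Hy; rewrite (Derive_n_ext_loc f (fun _ => 0)).
  - destruct k; [reflexivity | apply Derive_n_const].
  - destruct Hy as [Hy | Hy].
    + apply (filter_imp (fun t => t < 0)); [intros t Ht; apply f_vanishes; lra|].
      exact (open_lt 0 y Hy).
    + apply (filter_imp (fun t => 1 < t)); [intros t Ht; apply f_vanishes; lra|].
      exact (open_gt 1 y Hy).
Qed.

Lemma sum_n_pad {G : AbelianMonoid} (u : nat -> G) n p :
  (forall m, (n < m)%nat -> u m = zero) -> sum_n u (n + p) = sum_n u n.
Proof.
  intros Hu; induction p as [|p IH]; [now rewrite Nat.add_0_r|].
  rewrite Nat.add_succ_r, sum_Sn, Hu, plus_zero_r by lia; exact IH.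
Qed.

Section ExponentialSums.

Variables (f : R -> R) (N a : nat).
Hypotheses (f_smooth : smooth f) (f_vanishes : forall y, y <= 0 \/ 1 <= y -> f y = 0).
Hypothesis a_lt_N : (a < N)%nat.

(* The k trailing zero terms make the boundary terms of k summations by parts vanish. *)
Lemma exp_sum_eq_twisted_sum k :
  exp_sum f N a = twisted_sum (2 * PI * (INR a / INR N)) (/ INR N) f (N - 1 + k).
Proof.
  assert (HN : 0 < INR N) by (apply lt_0_INR; lia).
  unfold exp_sum, twisted_sum; rewrite sum_n_pad.
  - apply sum_n_ext; intros m; unfold Rdiv; do 2 f_equal; ring.
  - intros m Hm; rewrite f_vanishes; [apply Cmult_0_r|right].
    assert (INR N <= INR m) by (apply le_INR; lia).
    apply (Rmult_le_reg_r (INR N)); [lra|].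
    rewrite Rmult_assoc, Rinv_l by lra; lra.
Qed.

Lemma Cmod_exp_sum_le r k U : 0 < r -> dist_circ (INR a / INR N) 0 >= r ->
  (forall y, Rabs (Derive_n f k y) <= U) ->
  Cmod (exp_sum f N a) * (INR N * r) ^ k <= INR N * INR (k + 1) * U.
Proof.
  intros Hr Hdist HU.
  assert (HN : 0 < INR N) by (apply lt_0_INR; lia).
  set (t := INR a / INR N) in Hdist |- *; set (d := / INR N); set (L := (N - 1 + k)%nat).
  assert (Hd : 0 < d) by (apply Rinv_0_lt_compat; lra).
  assert (HNd : INR N * d = 1) by (unfold d; field; lra).
  assert (Ht : 0 <= t < 1).
  { assert (INR a < INR N) by (apply lt_INR; lia).
    unfold t; split; [apply Rdiv_le_0_compat; [apply pos_INR | lra]|].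
    apply (Rmult_lt_reg_r (INR N)); [lra|]; unfold Rdiv; rewrite Rmult_assoc, Rinv_l; lra. }
  assert (HL : INR (S L) = INR N + INR k)
    by (unfold L; rewrite <- plus_INR; f_equal; lia).
  assert (Hsum := Cmod_twisted_sum_le (2 * PI * t) d (backdiff f d k) L (d ^ k * U)
                    (fun m => Derive_n_backdiff_bound f d Hd f_smooth k 0 U HU (INR m * d))).
  rewrite Cmod_twisted_sum_backdiff in Hsum by (auto || (rewrite HL; nra)).
  rewrite (exp_sum_eq_twisted_sum k); fold t d L.
  assert (Hq := dist_circ_le_Cmod_1_minus_expi t Ht).
  assert (HSL : INR (S L) <= INR N * INR (k + 1))
    by (rewrite <- mult_INR; apply le_INR; unfold L; nia).
  set (X := Cmod (twisted_sum (2 * PI * t) d f L)) in *.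
  set (q := Cmod (1 - expi (2 * PI * t))) in *.
  assert (HX : 0 <= X) by apply Cmod_ge_0.
  assert (HU0 : 0 <= U) by (eapply Rle_trans; [apply Rabs_pos | apply (HU 0)]).
  apply Rle_trans with ((INR N * q) ^ k * X).
  - rewrite Rmult_comm; apply Rmult_le_compat_r; [exact HX|].
    apply pow_incr; split; [apply Rmult_le_pos | apply Rmult_le_compat_l]; lra.
  - rewrite Rpow_mult_distr, Rmult_assoc.
    apply Rle_trans with (INR N ^ k * (INR (S L) * (d ^ k * U))).
    + apply Rmult_le_compat_l; [apply pow_le; lra | exact Hsum].
    + replace (INR N ^ k * (INR (S L) * (d ^ k * U))) with ((INR N * d) ^ k * INR (S L) * U)
        by (rewrite Rpow_mult_distr; ring).
      rewrite HNd, pow1, Rmult_1_l; apply Rmult_le_compat_r; assumption.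
Qed.

End ExponentialSums.

Lemma Rpower_pos x y : 0 < Rpower x y.
Proof. apply exp_pos. Qed.

Lemma fact_le_pow k : (fact k <= k ^ k)%nat.
Proof.
  induction k as [|k IH]; [simpl; lia|].
  change (fact (S k)) with (S k * fact k)%nat; rewrite Nat.pow_succ_r'.
  apply Nat.mul_le_mono_l, (Nat.le_trans _ _ _ IH), Nat.pow_le_mono_l; lia.
Qed.

Lemma inv_pow_le_Rpower x k n : 1 <= x -> n <= INR k -> / x ^ k <= Rpower x (- n).
Proof.
  intros Hx Hn; rewrite <- Rpower_pow, <- Rpower_Ropp by lra.
  apply Rle_Rpower; lra.
Qed.

Lemma one_le_Rpower x n : 0 < x <= 1 -> 0 <= n -> 1 <= Rpower x (- n).
Proof.
  intros Hx Hn; unfold Rpower.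
  assert (ln x <= 0).
  { destruct (Req_dec x 1) as [-> | Hx1]; [rewrite ln_1; lra|].
    rewrite <- ln_1; left; apply ln_increasing; lra. }
  eapply Rle_trans; [|apply exp_ineq1_le]; nra.
Qed.

Lemma pow_mul_Rpower_fact_le C s x k : 0 < C -> 0 < s -> 0 < x ->
  INR k <= Rpower (x / (4 * C)) (1 / s) -> C ^ k * Rpower (INR (fact k)) s <= (x / 4) ^ k.
Proof.
  intros HC Hs Hx Hk; destruct k as [|k'].
  - simpl; unfold Rpower; rewrite ln_1, Rmult_0_r, exp_0; lra.
  - set (k := S k') in *.
    assert (Hk0 : 0 < INR k) by (apply lt_0_INR; unfold k; lia).
    assert (Hfact : Rpower (INR (fact k)) s <= Rpower (INR k) s ^ k).
    { rewrite <- Rpower_pow, Rpower_mult, Rmult_comm, <- Rpower_mult, Rpower_pow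
        by (try apply Rpower_pos; lra).
      apply Rle_Rpower_l; [lra|]; rewrite <- pow_INR.
      split; [apply lt_0_INR, lt_O_fact | apply le_INR, fact_le_pow]. }
    assert (Hpow : Rpower (INR k) s <= x / (4 * C)).
    { replace (x / (4 * C)) with (Rpower (Rpower (x / (4 * C)) (1 / s)) s).
      - apply Rle_Rpower_l; lra.
      - rewrite Rpower_mult; replace (1 / s * s) with 1 by (field; lra).
        apply Rpower_1, Rdiv_lt_0_compat; lra. }
    replace ((x / 4) ^ k) with (C ^ k * (x / (4 * C)) ^ k)
      by (rewrite <- Rpow_mult_distr; f_equal; field; lra).
    apply Rmult_le_compat_l; [apply pow_le; lra|].
    eapply Rle_trans; [exact Hfact|]; apply pow_incr; split; [left; apply Rpower_pos | exact Hpow].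
Qed.

Lemma inv2_pow_le_Rpower k Y : Y < INR k + 1 -> (/ 2) ^ k <= 2 * Rpower 2 (- Y).
Proof.
  intros HY.
  rewrite pow_inv, <- Rpower_pow, <- Rpower_Ropp by lra.
  rewrite <- (Rpower_1 2) at 2 by lra; rewrite <- Rpower_plus.
  apply Rle_Rpower; lra.
Qed.

Lemma gevrey_weight_decay C s x : 0 < C -> 0 < s -> 0 < x -> exists k : nat,
  INR (k + 1) * (C ^ (k + 1) * Rpower (INR (fact k)) s) / x ^ k <=
  2 * C * Rpower 2 (- Rpower (x / (4 * C)) (1 / s)).
Proof.
  intros HC Hs Hx; set (Y := Rpower (x / (4 * C)) (1 / s)).
  destruct (nfloor_ex Y (Rlt_le _ _ (Rpower_pos _ _))) as [k [HkY HYk]]; exists k.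
  assert (Hterm := pow_mul_Rpower_fact_le C s x k HC Hs Hx HkY).
  assert (Hlin : INR (k + 1) <= 2 ^ k).
  { replace (2 ^ k) with (INR (2 ^ k)) by (rewrite pow_INR; f_equal; simpl; lra).
    apply le_INR; rewrite Nat.add_1_r; apply Nat.pow_gt_lin_r; lia. }
  assert (Hhalf := inv2_pow_le_Rpower k Y HYk).
  assert (H2 : 2 ^ k * (/ 2) ^ k = 1) by (rewrite <- Rpow_mult_distr, Rinv_r, pow1; lra).
  assert (Hh0 : 0 < (/ 2) ^ k) by (apply pow_lt; lra).
  assert (Hxk : 0 < x ^ k) by (apply pow_lt; lra).
  apply Rle_trans with (INR (k + 1) * C * (/ 2) ^ k * (/ 2) ^ k).
  - assert (Hquarter : (x / 4) ^ k / x ^ k = (/ 2) ^ k * (/ 2) ^ k).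
    { unfold Rdiv; rewrite <- pow_inv, <- !Rpow_mult_distr; f_equal; field; lra. }
    replace (INR (k + 1) * C * (/ 2) ^ k * (/ 2) ^ k)
      with (INR (k + 1) * C * ((x / 4) ^ k / x ^ k)) by (rewrite Hquarter; ring).
    rewrite pow_add, pow_1; unfold Rdiv.
    replace (INR (k + 1) * (C ^ k * C * Rpower (INR (fact k)) s) * / x ^ k)
      with (INR (k + 1) * C * (C ^ k * Rpower (INR (fact k)) s * / x ^ k)) by ring.
    apply Rmult_le_compat_l; [apply Rmult_le_pos; [apply pos_INR | lra]|].
    apply Rmult_le_compat_r; [left; apply Rinv_0_lt_compat|]; assumption.
  - assert (Hweight : INR (k + 1) * (/ 2) ^ k <= 1) by nra.
    replace (INR (k + 1) * C * (/ 2) ^ k * (/ 2) ^ k)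
      with (C * (INR (k + 1) * (/ 2) ^ k) * (/ 2) ^ k) by ring.
    assert (0 < C * (/ 2) ^ k) by (apply Rmult_lt_0_compat; lra).
    assert (C * (/ 2) ^ k <= C * (2 * Rpower 2 (- Y))) by (apply Rmult_le_compat_l; lra).
    nra.
Qed.

Lemma Glb_Rbar_nonneg_finite (E : R -> Prop) v :
  (forall u, E u -> 0 <= u) -> E v -> Glb_Rbar E = Finite (real (Glb_Rbar E)).
Proof.
  intros Hnonneg Hv; destruct (Glb_Rbar_correct E) as [Hlb Hglb].
  assert (H0 : Rbar_le 0 (Glb_Rbar E)) by (apply Hglb; intros u Hu; apply Hnonneg, Hu).
  assert (Hle : Rbar_le (Glb_Rbar E) v) by (apply Hlb, Hv).
  destruct (Glb_Rbar E); simpl in *; easy.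
Qed.

Lemma real_Glb_Rbar_le (E : R -> Prop) v :
  (forall u, E u -> 0 <= u) -> E v -> real (Glb_Rbar E) <= v.
Proof.
  intros Hnonneg Hv; destruct (Glb_Rbar_correct E) as [Hlb _].
  rewrite (Glb_Rbar_nonneg_finite E v) in Hlb by assumption; exact (Hlb v Hv).
Qed.

Lemma le_real_Glb_Rbar (E : R -> Prop) v z :
  (forall u, E u -> 0 <= u) -> E v -> (forall u, E u -> z <= u) -> z <= real (Glb_Rbar E).
Proof.
  intros Hnonneg Hv Hz; destruct (Glb_Rbar_correct E) as [_ Hglb].
  rewrite (Glb_Rbar_nonneg_finite E v) in Hglb by assumption.
  apply (Hglb (Finite z)); intros u Hu; apply Hz, Hu.
Qed.

(* [decay_profile chi x] is g_χ(x) = inf_k (k+1) sup|χ^(k)| / x^k, written as an infimum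
   over all pairs (k, U) with U a bound of |χ^(k)|. *)
Definition weighted_derivative_bounds (chi : R -> R) (x v : R) : Prop :=
  exists k U, (forall y, Rabs (Derive_n chi k y) <= U) /\ v = INR (k + 1) * U / x ^ k.

Definition decay_profile (chi : R -> R) (x : R) : R :=
  real (Glb_Rbar (weighted_derivative_bounds chi x)).

Section SmoothCompactlySupported.

Variable chi : R -> R.
Hypothesis chi_Cc : Cc_inf_01 chi.

Lemma Cc_inf_01_vanishes y : y <= 0 \/ 1 <= y -> chi y = 0.
Proof. destruct chi_Cc as [_ [eps [Heps Hzero]]]; intros; apply Hzero; lra. Qed.

Lemma Cc_inf_01_Derive_n_le k B : 0 <= B ->
  (forall y, 0 <= y <= 1 -> Rabs (Derive_n chi k y) <= B) ->
  forall y, Rabs (Derive_n chi k y) <= B.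
Proof.
  intros HB Hin y; destruct (Rlt_or_le y 0); [|destruct (Rle_or_lt y 1)];
    try (apply Hin; lra);
    rewrite Derive_n_vanishes_outside, Rabs_R0 by (exact Cc_inf_01_vanishes || lra); exact HB.
Qed.

Lemma Cc_inf_01_Derive_n_bounded k : exists U, forall y, Rabs (Derive_n chi k y) <= U.
Proof.
  destruct (continuity_ab_maj (fun y => Rabs (Derive_n chi k y)) 0 1) as [M [HM _]].
  - lra.
  - intros c _; apply (continuity_pt_comp (Derive_n chi k) Rabs); [|apply Rcontinuity_abs].
    apply continuity_pt_filterlim, (ex_derive_continuous (V := R_NormedModule)).
    apply (proj1 chi_Cc (S k) c).
  - exists (Rabs (Derive_n chi k M)); apply Cc_inf_01_Derive_n_le; [apply Rabs_pos | exact HM].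
Qed.

Lemma gevrey_Derive_n_bound s : gevrey_c_01 s chi -> exists C, 0 < C /\
  forall k y, Rabs (Derive_n chi k y) <= C ^ (k + 1) * Rpower (INR (fact k)) s.
Proof.
  intros [_ Hgev]; destruct (Hgev 0 1) as [C [HC Hbound]]; exists C; split; [exact HC|].
  intros k; apply Cc_inf_01_Derive_n_le; [|intros y Hy; apply Hbound, Hy].
  apply Rmult_le_pos; [apply pow_le; lra | left; apply Rpower_pos].
Qed.

Lemma weighted_derivative_bounds_nonneg x :
  0 < x -> forall v, weighted_derivative_bounds chi x v -> 0 <= v.
Proof.
  intros Hx v [k [U [HU ->]]].
  assert (0 <= U) by (eapply Rle_trans; [apply Rabs_pos | apply (HU 0)]).
  apply Rdiv_le_0_compat; [apply Rmult_le_pos; [apply pos_INR | lra] | apply pow_lt; lra].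
Qed.

Lemma decay_profile_le x k U : 0 < x -> (forall y, Rabs (Derive_n chi k y) <= U) ->
  decay_profile chi x <= INR (k + 1) * U / x ^ k.
Proof.
  intros Hx HU; apply real_Glb_Rbar_le; [exact (weighted_derivative_bounds_nonneg x Hx)|].
  exists k, U; split; [exact HU | reflexivity].
Qed.

Lemma le_decay_profile x z : 0 < x ->
  (forall k U, (forall y, Rabs (Derive_n chi k y) <= U) -> z <= INR (k + 1) * U / x ^ k) ->
  z <= decay_profile chi x.
Proof.
  intros Hx Hz; destruct (Cc_inf_01_Derive_n_bounded 0) as [U0 HU0].
  apply (le_real_Glb_Rbar _ (INR (0 + 1) * U0 / x ^ 0));
    [exact (weighted_derivative_bounds_nonneg x Hx) | exists 0%nat, U0; split; auto |].
  intros v [k [U [HU ->]]]; exact (Hz k U HU).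
Qed.

Lemma decay_profile_nonneg x : 0 < x -> 0 <= decay_profile chi x.
Proof.
  intros Hx; apply le_decay_profile; [exact Hx|]; intros k U HU.
  apply (weighted_derivative_bounds_nonneg x Hx); exists k, U; split; auto.
Qed.

Lemma Cmod_exp_sum_le_decay_profile N a r : (a < N)%nat -> 0 < r ->
  dist_circ (INR a / INR N) 0 >= r ->
  Cmod (exp_sum chi N a) <= INR N * decay_profile chi (INR N * r).
Proof.
  intros HaN Hr Hdist.
  assert (HN : 0 < INR N) by (apply lt_0_INR; lia).
  assert (HNr : 0 < (INR N * r)) by nra.
  replace (Cmod (exp_sum chi N a)) with (INR N * (Cmod (exp_sum chi N a) / INR N)) by (field; lra).
  apply Rmult_le_compat_l; [lra|]; apply le_decay_profile; [exact HNr|]; intros k U HU.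
  assert (Hk := Cmod_exp_sum_le chi N a (proj1 chi_Cc) Cc_inf_01_vanishes HaN r k U Hr Hdist HU).
  assert (0 < (INR N * r) ^ k) by (apply pow_lt; exact HNr).
  apply (Rmult_le_reg_r (INR N * (INR N * r) ^ k)); [nra|].
  replace (Cmod (exp_sum chi N a) / INR N * (INR N * (INR N * r) ^ k))
    with (Cmod (exp_sum chi N a) * (INR N * r) ^ k) by (field; lra).
  replace (INR (k + 1) * U / (INR N * r) ^ k * (INR N * (INR N * r) ^ k))
    with (INR N * INR (k + 1) * U) by (field; lra).
  exact Hk.
Qed.

Lemma decay_profile_le_Rpower n : 0 <= n ->
  exists Cn, 0 < Cn /\ forall x, 0 < x -> decay_profile chi x <= Cn * Rpower x (- n).
Proof.
  intros Hn; destruct (nfloor_ex n Hn) as [k0 [_ Hk0]]; set (k := S k0).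
  assert (Hk : n <= INR k) by (unfold k; rewrite S_INR; lra).
  destruct (Cc_inf_01_Derive_n_bounded k) as [Uk HUk].
  destruct (Cc_inf_01_Derive_n_bounded 0) as [U0 HU0].
  assert (0 <= Uk) by (eapply Rle_trans; [apply Rabs_pos | apply (HUk 0)]).
  assert (0 <= U0) by (eapply Rle_trans; [apply Rabs_pos | apply (HU0 0)]).
  assert (0 <= INR (k + 1) * Uk) by (apply Rmult_le_pos; [apply pos_INR | lra]).
  exists (INR (k + 1) * Uk + U0 + 1); split; [lra|]; intros x Hx.
  assert (Hpow := Rpower_pos x (- n)).
  destruct (Rle_or_lt 1 x) as [Hx1 | Hx1].
  - eapply Rle_trans; [apply (decay_profile_le x k Uk Hx HUk)|].
    assert (/ x ^ k <= Rpower x (- n)) by (apply inv_pow_le_Rpower; lra).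
    unfold Rdiv; apply Rle_trans with (INR (k + 1) * Uk * Rpower x (- n)); [|nra].
    apply Rmult_le_compat_l; assumption.
  - eapply Rle_trans; [apply (decay_profile_le x 0 U0 Hx HU0)|].
    assert (1 <= Rpower x (- n)) by (apply one_le_Rpower; lra).
    replace (INR (0 + 1) * U0 / x ^ 0) with U0 by (simpl; field); nra.
Qed.

Lemma decay_profile_le_gevrey s : 0 < s -> gevrey_c_01 s chi ->
  exists C c, 0 < C /\ 0 < c /\
    forall x, 0 < x -> decay_profile chi x <= C * exp (- c * Rpower x (1 / s)).
Proof.
  intros Hs Hgev; destruct (gevrey_Derive_n_bound s Hgev) as [C [HC HCk]].
  exists (2 * C), (ln 2 * Rpower (/ (4 * C)) (1 / s)).
  assert (Hln2 : 0 < ln 2) by (assert (H := ln_lt_2); lra).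
  split; [lra|]; split; [apply Rmult_lt_0_compat; [exact Hln2 | apply Rpower_pos]|].
  intros x Hx; destruct (gevrey_weight_decay C s x HC Hs Hx) as [k Hk].
  eapply Rle_trans; [apply (decay_profile_le x k _ Hx (HCk k))|].
  eapply Rle_trans; [exact Hk|]; right; f_equal; unfold Rpower at 1; f_equal.
  unfold Rdiv at 1; rewrite <- Rpower_mult_distr by (try apply Rinv_0_lt_compat; lra); ring.
Qed.

End SmoothCompactlySupported.

Theorem lemma1 (chi : R -> R) (Hchi : Cc_inf_01 chi) :
  exists g : R -> R,
    (forall x : R, 0 < x -> 0 <= g x) /\
    (forall (N a : nat) (r : R),
        (a < N)%nat -> 0 < r < 1 / 2 ->
        dist_circ (INR a / INR N) 0 >= r ->
        Cmod (exp_sum chi N a) <= INR N * g (INR N * r)) /\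
    (forall n : R, 0 <= n ->
        exists Cn : R, 0 < Cn /\ forall x : R, 0 < x -> g x <= Cn * Rpower x (- n)) /\
    (forall s : R, 1 < s -> gevrey_c_01 s chi ->
        exists C c : R, 0 < C /\ 0 < c /\
          forall x : R, 0 < x -> g x <= C * exp (- c * Rpower x (1 / s))).
Proof.
  exists (decay_profile chi); split; [|split; [|split]].
  - exact (decay_profile_nonneg chi Hchi).
  - intros N a r HaN Hr; exact (Cmod_exp_sum_le_decay_profile chi Hchi N a r HaN (proj1 Hr)).
  - exact (decay_profile_le_Rpower chi Hchi).
  - intros s Hs; apply (decay_profile_le_gevrey chi Hchi s); lra.
Qed.
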